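(* The Banach space $c_0$ (real or complex) has the $\mathbf{L}_{p,p}$-nu.
   Context: For a Banach space $X$: $\Pi(X)=\{(x,x^* )\in S_X\times S_{X^*}: x^*(x)=1\}$; for $T\in\mathcal{L}(X)$ (bounded linear operators on $X$), $v(T)=\sup\{|x^*(Tx)|:(x,x^* )\in\Pi(X)\}$. $X$ has the $\mathbf{L}_{p,p}$-nu if for every $\varepsilon>0$ and $(x,x^* )\in\Pi(X)$ there is $\eta(\varepsilon,(x,x^* ))>0$ such that whenever $T\in\mathcal{L}(X)$ with $v(T)=1$ satisfies $|x^*(Tx)|>1-\eta(\varepsilon,(x,x^* ))$, there is $S\in\mathcal{L}(X)$ with $v(S)=1$, $|x^*(Sx)|=1$ and $\|S-T\|<\varepsilon$. *)

(* The Banach space c_0(K) is modelled as the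
   predicate [in_c0] on sequences nat -> K; vectors, functionals and
   operators are plain functions, and all requirements (linearity,
   boundedness, mapping into c_0) are imposed on c_0 only.  All suprema
   (sup-norm, norm of a functional, operator norm, numerical radius) are
   written out as "least upper bound" conditions, since K = R[i] carries no
   sup operator; norms take (real) values in K. *)
From mathcomp Require Import all_boot all_order all_algebra.
From mathcomp Require Import reals complex.
Set Implicit Arguments. Unset Strict Implicit. Unset Printing Implicit Defensive.
Import Order.TTheory GRing.Theory Num.Theory.
Local Open Scope ring_scope.

Section C0.
Variable K : numFieldType.

Definition vec := nat -> K.

Definition in_c0 (x : vec) : Prop :=
  forall e : K, 0 < e -> exists N : nat, forall n : nat, (N <= n)%N -> `|x n| < e.

Definition c0_norm_eq (x : vec) (r : K) : Prop :=
  (forall n, `|x n| <= r) /\ (forall e : K, 0 < e -> exists n, r - e < `|x n|).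

Definition in_ball (x : vec) : Prop := forall n, `|x n| <= 1.

Definition in_sphere (x : vec) : Prop := in_c0 x /\ c0_norm_eq x 1.

Definition lin_functional (f : vec -> K) : Prop :=
  forall (a : K) (x y : vec), in_c0 x -> in_c0 y ->
    f (fun n => a * x n + y n) = a * f x + f y.

Definition functional_norm_eq (f : vec -> K) (r : K) : Prop :=
  (forall x, in_c0 x -> in_ball x -> `|f x| <= r) /\
  (forall e : K, 0 < e -> exists x, [/\ in_c0 x, in_ball x & r - e < `|f x|]).

Definition in_dual_sphere (f : vec -> K) : Prop :=
  lin_functional f /\ functional_norm_eq f 1.

Definition bounded_op (T : vec -> vec) : Prop :=
  [/\ (forall x, in_c0 x -> in_c0 (T x)),
      (forall (a : K) (x y : vec), in_c0 x -> in_c0 y ->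
         T (fun n => a * x n + y n) = (fun n => a * T x n + T y n)) &
      exists M : K, forall x, in_c0 x -> in_ball x -> forall n, `|T x n| <= M].

Definition in_Pi (x : vec) (f : vec -> K) : Prop :=
  [/\ in_sphere x, in_dual_sphere f & f x = 1].

Definition numrad_eq (T : vec -> vec) (r : K) : Prop :=
  (forall x f, in_Pi x f -> `|f (T x)| <= r) /\
  (forall e : K, 0 < e -> exists x f, in_Pi x f /\ r - e < `|f (T x)|).

Definition op_dist_lt (S T : vec -> vec) (eps : K) : Prop :=
  exists c : K, c < eps /\
    forall x, in_c0 x -> in_ball x -> forall n, `|S x n - T x n| <= c.

Definition c0_has_Lpp_nu : Prop :=
  forall eps : K, 0 < eps ->
  forall (x : vec) (f : vec -> K), in_Pi x f ->
  exists eta : K, 0 < eta /\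
    forall T : vec -> vec, bounded_op T -> numrad_eq T 1 ->
      1 - eta < `|f (T x)| ->
      exists S : vec -> vec,
        [/\ bounded_op S, numrad_eq S 1, `|f (S x)| = 1 & op_dist_lt S T eps].

End C0.

From mathcomp Require Import all_boot all_order all_algebra.
From mathcomp Require Import reals complex.
From mathcomp Require Import ring.
From Stdlib Require Import FunctionalExtensionality.
Set Implicit Arguments. Unset Strict Implicit. Unset Printing Implicit Defensive.
Import Order.TTheory GRing.Theory Num.Theory.
Local Open Scope ring_scope.

(* Let (x, f) be in Pi(c_0).  As x_n -> 0, its peak set q = {k : |x_k| = 1} is
   finite, contained in [0, N), and |x_k| <= r < 1 off q.  Splitting off the
   coordinates in q, a functional bounded by 1 on the vectors unimodular on q
   has mass sum_{k in q} |phi(e_k)| at most 1 minus its norm off q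
   ([mass_split]), so that (1 - r)(1 - mass) <= 1 - |phi x| ([mass_deficit]).
   Hence f has mass 1 on q and vanishes off q; and, as c_0 rows are tested by
   coordinate functionals, v(T) <= 1 gives ||T|| <= 1 and the same estimate for
   the rows n in q of T.  Now let v(T) = 1 with |f(Tx)| close to 1.  The
   parallelogram law of the scalars yields an alignment inequality
   ([alignment]) forcing each (Tx)_k, k in q with f(e_k) <> 0, to be close to a
   unimodular target mu_k with sum_k mu_k f(e_k) unimodular ([target_close]);
   then the k-th row of T has mass close to 1 on q and is almost aligned with
   the phases of x ([row_align]).  Replacing each such row by its normalised,
   exactly aligned version ([row_patch]) gives S with ||S|| <= 1,
   |f(Sx)| = 1, hence v(S) = 1, and ||S - T|| small ([patched_approx]).
   Everything is done over a numFieldType satisfying the parallelogram law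
   ([c0_Lpp_nu]), which covers R and R[i]. *)

Section C0Basics.
Variable K : numFieldType.

Definition ph (b : K) : K := if b == 0 then 1 else `|b| / b.

Lemma ph_norm (b : K) : `|ph b| = 1.
Proof.
rewrite /ph; case: eqP => [_|/eqP b0]; first by rewrite normr1.
by rewrite normf_div normr_id divff // normr_eq0.
Qed.

Lemma ph_mul (b : K) : ph b * b = `|b|.
Proof.
rewrite /ph; case: eqP => [->|/eqP b0]; first by rewrite mulr0 normr0.
by rewrite divfK.
Qed.

Definition basis (k : nat) : vec K := fun j => if j == k then 1 else 0.
Definition zero_on (q : pred nat) (z : vec K) : vec K :=
  fun j => if q j then 0 else z j.

Lemma in_c0_le (z z' : vec K) :
  in_c0 z -> (forall j, `|z' j| <= `|z j|) -> in_c0 z'.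
Proof.
move=> z_c0 le_z e e_gt0; have [N zN] := z_c0 e e_gt0; exists N => n le_Nn.
exact: le_lt_trans (le_z n) (zN n le_Nn).
Qed.

Lemma in_c0_eventually (z z' : vec K) N :
  in_c0 z -> (forall j, (N <= j)%N -> z' j = z j) -> in_c0 z'.
Proof.
move=> z_c0 eq_tail e e_gt0; have [M zM] := z_c0 e e_gt0.
exists (maxn N M) => n; rewrite geq_max => /andP[le_Nn le_Mn].
by rewrite eq_tail // zM.
Qed.

Lemma in_c0_zero : in_c0 (fun _ : nat => 0 : K).
Proof. by move=> e e_gt0; exists 0%N => n _; rewrite normr0. Qed.

Lemma in_c0_basis k : in_c0 (basis k).
Proof.
apply: (in_c0_eventually (N := k.+1) in_c0_zero) => j lt_kj.
by rewrite /basis gtn_eqF.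
Qed.

Lemma in_c0_scale (c : K) (z : vec K) : in_c0 z -> in_c0 (fun j => c * z j).
Proof.
move=> z_c0; have [->|c0] := eqVneq c 0.
  by apply: (in_c0_le in_c0_zero) => j; rewrite mul0r normr0.
have c_gt0 : 0 < `|c| by rewrite normr_gt0.
move=> e e_gt0; have [N zN] := z_c0 (e / `|c|) (divr_gt0 e_gt0 c_gt0).
by exists N => n le_Nn; rewrite normrM -ltr_pdivlMl // mulrC zN.
Qed.

Lemma in_c0_zero_on q (z : vec K) : in_c0 z -> in_c0 (zero_on q z).
Proof.
move=> z_c0; apply: (in_c0_le z_c0) => j.
by rewrite /zero_on; case: (q j); rewrite ?normr0.
Qed.

Lemma in_ball_zero_on q (z : vec K) : in_ball z -> in_ball (zero_on q z).
Proof. by move=> z_ball j; rewrite /zero_on; case: (q j); rewrite ?normr0. Qed.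

Lemma in_ball_zero : in_ball (fun _ : nat => 0 : K).
Proof. by move=> j; rewrite normr0. Qed.

Lemma lin_functional0 (phi : vec K -> K) :
  lin_functional phi -> phi (fun _ => 0) = 0.
Proof.
move=> phi_lin; have := phi_lin 1 _ _ in_c0_zero in_c0_zero.
have -> : (fun n : nat => 1 * (0 : K) + 0) = (fun _ => 0).
  by apply: functional_extensionality => n; rewrite mul1r addr0.
rewrite mul1r => double; apply: (@addrI _ (phi (fun _ => 0))).
by rewrite addr0 -double.
Qed.

Lemma lin_functionalZ (phi : vec K -> K) a (z : vec K) :
  lin_functional phi -> in_c0 z -> phi (fun n => a * z n) = a * phi z.
Proof.
move=> phi_lin z_c0; have := phi_lin a _ _ z_c0 in_c0_zero.
rewrite lin_functional0 // addr0 => <-.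
by congr phi; apply: functional_extensionality => n; rewrite addr0.
Qed.

Lemma lin_row (T : vec K -> vec K) n :
  bounded_op T -> lin_functional (fun z => T z n).
Proof. by case=> _ T_lin _ a z z' z_c0 z'_c0 /=; rewrite T_lin. Qed.

Lemma Pi_coord (u : vec K) n : in_c0 u -> in_ball u -> `|u n| = 1 ->
  in_Pi u (fun z => z n / u n).
Proof.
move=> u_c0 u_ball un1.
have un0 : u n != 0 by rewrite -normr_eq0 un1 oner_eq0.
have below1 (e : K) : 0 < e -> 1 - e < 1 by move=> e_gt0; rewrite gtrDl oppr_lt0.
split; first by split=> //; split=> // e e_gt0; exists n; rewrite un1 below1.
- split; first by move=> a z z' _ _; rewrite mulrDl mulrA.
  split; first by move=> z _ z_ball; rewrite normf_div un1 divr1 z_ball.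
  by move=> e e_gt0; exists u; split=> //; rewrite divff // normr1 below1.
- by rewrite divff.
Qed.

End C0Basics.
Arguments basis {K} k.
Arguments in_c0_zero {K}.
Arguments in_ball_zero {K}.

Section MassSplit.
Variable K : numFieldType.
Variables (q : pred nat) (N : nat).
Hypothesis q_lt : forall k, q k -> (k < N)%N.

Definition peak_mass (phi : vec K -> K) : K :=
  \sum_(0 <= k < N | q k) `|phi (basis k)|.

(* phi is bounded by 1 on the vectors of the unit ball that are unimodular on q;
   norm-one functionals and (by Pi_coord) the rows n in q of an operator T with
   v(T) <= 1 have this property. *)
Definition peak_bounded (phi : vec K -> K) : Prop :=
  forall u, in_c0 u -> in_ball u -> (forall k, q k -> `|u k| = 1) -> `|phi u| <= 1.

Lemma decompose (phi : vec K -> K) (z : vec K) :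
  lin_functional phi -> in_c0 z ->
  phi z = \sum_(0 <= k < N | q k) z k * phi (basis k) + phi (zero_on q z).
Proof.
move=> phi_lin z_c0.
pose cut M : vec K := fun j => if q j && (j < M)%N then 0 else z j.
have cut_c0 M : in_c0 (cut M).
  by apply: (in_c0_le z_c0) => j; rewrite /cut; case: ifP; rewrite ?normr0.
have split_below M :
    phi z = \sum_(0 <= k < M | q k) z k * phi (basis k) + phi (cut M).
  elim: M => [|M IH].
    rewrite big_geq // add0r; congr phi.
    by apply: functional_extensionality => j; rewrite /cut andbF.
  rewrite big_mkcond big_nat_recr //= -big_mkcond IH -addrA; congr (_ + _).
  case qM: (q M); last first.
    rewrite add0r; congr phi; apply: functional_extensionality => j.
    rewrite /cut ltnS (leq_eqVlt j M).
    by case: (eqVneq j M) => [->|_]; rewrite ?qM.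
  rewrite -(phi_lin _ _ _ (in_c0_basis M) (cut_c0 M.+1)); congr phi.
  apply: functional_extensionality => j; rewrite /cut /basis.
  case: (eqVneq j M) => [->|neq_jM]; first by rewrite qM ltnn ltnSn mulr1 addr0.
  by rewrite mulr0 add0r ltnS (leq_eqVlt j M) (negbTE neq_jM).
rewrite (split_below N); congr (_ + phi _); apply: functional_extensionality => j.
by rewrite /cut /zero_on; case qj: (q j); rewrite //= q_lt.
Qed.

(* The mass on q and the norm on the complement add up to at most 1: test phi
   against the vector that carries the phases of phi(e_k) on q and a rotated
   copy of w off q. *)
Lemma mass_split (phi : vec K -> K) (w : vec K) :
  lin_functional phi -> peak_bounded phi ->
  in_c0 w -> in_ball w -> (forall k, q k -> w k = 0) ->
  peak_mass phi + `|phi w| <= 1.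
Proof.
move=> phi_lin phi_bd w_c0 w_ball w_q.
pose th := ph (phi w).
pose u : vec K := fun k => if q k then ph (phi (basis k)) else th * w k.
have u_c0 : in_c0 u.
  apply: (in_c0_eventually (N := N) (in_c0_scale th w_c0)) => j le_Nj.
  by rewrite /u; case qj: (q j) => //; move: (q_lt qj); rewrite ltnNge le_Nj.
have u_ball : in_ball u.
  by move=> j; rewrite /u; case: (q j); rewrite ?normrM ph_norm ?mul1r.
have u_q k : q k -> `|u k| = 1 by move=> qk; rewrite /u qk ph_norm.
have u_off : zero_on q u = (fun k => th * w k).
  apply: functional_extensionality => j; rewrite /zero_on /u.
  by case qj: (q j); rewrite // w_q // mulr0.
have := phi_bd u u_c0 u_ball u_q.
rewrite (decompose phi_lin u_c0) u_off lin_functionalZ // ph_mul.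
rewrite (eq_bigr (fun k => `|phi (basis k)|)) => [|k qk]; last by rewrite /u qk ph_mul.
by rewrite ger0_norm // addr_ge0 // sumr_ge0.
Qed.

Lemma peak_mass_le1 (phi : vec K -> K) :
  lin_functional phi -> peak_bounded phi -> peak_mass phi <= 1.
Proof.
move=> phi_lin phi_bd.
have := mass_split phi_lin phi_bd in_c0_zero in_ball_zero (fun _ _ => erefl).
by apply: le_trans; rewrite lerDl.
Qed.

End MassSplit.

Section OperatorRows.
Variable K : numFieldType.
Variable T : vec K -> vec K.
Hypothesis T_bd : bounded_op T.
Hypothesis T_numrad : forall x f, in_Pi x f -> `|f (T x)| <= 1.

(* A row n of T is tested by the Pi-pairs (u, z |-> z_n / u_n). *)
Lemma row_peak_bounded (q : pred nat) n : q n -> peak_bounded q (fun z => T z n).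
Proof.
move=> qn u u_c0 u_ball u_q; have un1 := u_q n qn.
by have := T_numrad (Pi_coord u_c0 u_ball un1); rewrite normf_div un1 divr1.
Qed.

(* On c_0, v(T) <= 1 forces ||T|| <= 1: apply mass splitting to the row n with
   q = {n}. *)
Lemma op_ball (z : vec K) : in_c0 z -> in_ball z -> in_ball (T z).
Proof.
move=> z_c0 z_ball n.
have q_lt k : pred1 n k -> (k < n.+1)%N by move=> /eqP ->.
have row_lin := lin_row n T_bd.
have off_n k : pred1 n k -> zero_on (pred1 n) z k = 0.
  by move=> nk; rewrite /zero_on nk.
have := mass_split q_lt row_lin (row_peak_bounded (q := pred1 n) (eqxx n))
  (in_c0_zero_on _ z_c0) (in_ball_zero_on _ z_ball) off_n.
have single (F : nat -> K) : \sum_(0 <= k < n.+1 | pred1 n k) F k = F n.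
  rewrite big_mkcond big_nat_recr //= eqxx big_nat_cond big1 ?add0r //.
  by move=> k /andP[/andP[_ lt_kn] _]; rewrite ltn_eqF.
rewrite /peak_mass (decompose q_lt row_lin z_c0) !single => mass_le1.
apply: le_trans (ler_normD _ _) (le_trans _ mass_le1).
by rewrite lerD2r normrM ler_piMl.
Qed.

End OperatorRows.

Section FiniteFacts.
Variable K : numFieldType.

Lemma le_sum_term (q : pred nat) N (F : nat -> K) k :
  (forall j, q j -> 0 <= F j) -> q k -> (k < N)%N ->
  F k <= \sum_(0 <= j < N | q j) F j.
Proof.
move=> F_ge0 qk lt_kN.
rewrite big_mkcond (bigD1_seq k) /= ?qk ?mem_index_iota ?iota_uniq //.
by rewrite lerDl sumr_ge0 // => j _; case: ifP => // /F_ge0.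
Qed.

Lemma sum_const_le (q : pred nat) N (c : K) :
  0 <= c -> \sum_(0 <= j < N | q j) c <= N%:R * c.
Proof.
move=> c_ge0; rewrite big_mkcond; apply: le_trans (_ : \sum_(0 <= j < N) c <= _).
  by apply: ler_sum => j _; case: (q j).
by rewrite sumr_const_nat subn0 mulr_natl.
Qed.

Lemma finite_lower_bound (P : pred nat) (v : nat -> K) N :
  (forall k, P k -> 0 < v k) ->
  exists a : K, [/\ 0 < a, a <= 1 & forall k, (k < N)%N -> P k -> a <= v k].
Proof.
move=> v_gt0; elim: N => [|N [a [a_gt0 a_le1 a_le]]]; first by exists 1.
case PN: (P N); last first.
  exists a; split=> // k; rewrite ltnS leq_eqVlt => /orP[/eqP ->|]; first by rewrite PN.
  exact: a_le.
have vN_gt0 := v_gt0 N PN; have sum_gt0 : 0 < a + v N by rewrite addr_gt0.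
(* a v_N / (a + v_N) is below both a and v_N; the order need not be total. *)
exists (a * v N / (a + v N)); split.
- by rewrite divr_gt0 // mulr_gt0.
- rewrite ler_pdivrMr // mul1r (le_trans (_ : a * v N <= a * (a + v N))) //.
    by rewrite ler_pM2l // lerDr ltW.
  by apply: ler_piMl; [exact: ltW | exact: a_le1].
- move=> k; rewrite ltnS leq_eqVlt => /orP[/eqP -> _|lt_kN Pk].
    by rewrite ler_pdivrMr // [a * _]mulrC ler_pM2l // lerDl ltW.
  apply: le_trans (a_le k lt_kN Pk).
  by rewrite ler_pdivrMr // ler_pM2l // lerDr ltW.
Qed.

Lemma step_size N (eps : K) : 0 < eps ->
  exists delta : K, [/\ 0 < delta, delta <= 1 & N.+1%:R * delta < eps].
Proof.
move=> eps_gt0; have eps1_gt0 : 0 < 1 + eps by rewrite addr_gt0.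
have N1_gt0 : 0 < N.+1%:R :> K by rewrite ltr0Sn.
exists (eps / (N.+1%:R * (1 + eps))); split.
- by rewrite divr_gt0 // mulr_gt0.
- rewrite ler_pdivrMr ?mulr_gt0 //.
  rewrite mul1r (le_trans (_ : eps <= 1 + eps)) ?lerDr //.
  by apply: ler_peMl; [exact: ltW | rewrite ler1n].
- have -> : N.+1%:R * (eps / (N.+1%:R * (1 + eps))) = eps / (1 + eps).
    by field; rewrite gt_eqF //= addrC natr1 gt_eqF.
  by rewrite ltr_pdivrMr // ltr_pMr // ltrDl.
Qed.

End FiniteFacts.

Section Parallelogram.
Variable K : numFieldType.

(* The parallelogram law; it holds for the real and for the complex scalars,
   and it is the only property of the scalar field used beyond its order. *)
Definition parallelogram_law : Prop :=
  forall a b : K, `|a - b| ^+ 2 + `|a + b| ^+ 2 = 2 * (`|a| ^+ 2 + `|b| ^+ 2).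

Hypothesis parallelogram : parallelogram_law.

Lemma norm_add_le_twice (p b : K) : `|b| <= p -> `|p + b| <= 2 * p.
Proof.
move=> le_bp; have p_ge0 : 0 <= p := le_trans (normr_ge0 _) le_bp.
by apply: le_trans (ler_normD _ _) _; rewrite ger0_norm // mulr_natl mulr2n lerD2l.
Qed.

Lemma deviation_le (p b : K) :
  `|b| <= p -> `|p - b| ^+ 2 <= 4 * p * (2 * p - `|p + b|).
Proof.
move=> le_bp; have p_ge0 : 0 <= p := le_trans (normr_ge0 _) le_bp.
have law := parallelogram p b; rewrite (ger0_norm p_ge0) in law.
have -> : `|p - b| ^+ 2 = 2 * (p ^+ 2 + `|b| ^+ 2) - `|p + b| ^+ 2.
  by rewrite -law addrK.
apply: (@le_trans _ _ ((2 * p - `|p + b|) * (2 * p + `|p + b|))).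
  have -> : (2 * p - `|p + b|) * (2 * p + `|p + b|) =
            2 * (p ^+ 2 + p ^+ 2) - `|p + b| ^+ 2 by ring.
  by rewrite lerD2r ler_wpM2l ?ler0n // lerD2l lerXn2r ?nnegrE.
rewrite [4 * p * _]mulrC ler_wpM2l ?subr_ge0 ?norm_add_le_twice //.
have -> : 4 * p = 2 * p + 2 * p by ring.
by rewrite lerD2l norm_add_le_twice.
Qed.

Lemma alignment (q : pred nat) N (p b : nat -> K) k :
  (forall j, `|b j| <= p j) -> q k -> (k < N)%N ->
  `|p k - b k| ^+ 2 <=
    4 * p k * `|\sum_(0 <= j < N | q j) p j - \sum_(0 <= j < N | q j) b j|.
Proof.
move=> le_bp qk lt_kN.
have p_ge0 j : 0 <= p j := le_trans (normr_ge0 _) (le_bp j).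
have gap_ge0 j : 0 <= 2 * p j - `|p j + b j|.
  by rewrite subr_ge0 norm_add_le_twice.
set P := \sum_(0 <= j < N | q j) p j; set B := \sum_(0 <= j < N | q j) b j.
have gaps_le : \sum_(0 <= j < N | q j) (2 * p j - `|p j + b j|) <= `|P - B|.
  rewrite sumrB -mulr_sumr -/P lerBlDr.
  have PB_le : `|P + B| <= \sum_(0 <= j < N | q j) `|p j + b j|.
    by rewrite /P /B -big_split /= ler_norm_sum.
  apply: le_trans (_ : `|P + B| + `|P - B| <= _); last by rewrite addrC lerD2l.
  have P2_ge0 : 0 <= 2 * P by rewrite mulr_ge0 ?ler0n ?sumr_ge0.
  rewrite -(ger0_norm P2_ge0).
  have -> : 2 * P = (P + B) + (P - B) by ring.
  exact: ler_normD.
apply: le_trans (deviation_le (le_bp k)) _.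
rewrite ler_wpM2l ?mulr_ge0 //; apply: le_trans gaps_le.
exact: (le_sum_term (F := fun j => 2 * p j - `|p j + b j|)).
Qed.

End Parallelogram.

Section PeakVector.
Variable K : numFieldType.
Variables (q : pred nat) (N : nat) (x : vec K) (r : K).
Hypothesis q_lt : forall k, q k -> (k < N)%N.
Hypothesis x_c0 : in_c0 x.
Hypothesis x_peak : forall k, q k -> `|x k| = 1.
Hypothesis x_off : forall k, ~~ q k -> `|x k| <= r.
Hypothesis r_gt0 : 0 < r.
Hypothesis r_lt1 : r < 1.

Local Notation mass := (peak_mass q N).

Lemma peak_x_ball : in_ball x.
Proof.
by move=> k; case qk: (q k); [rewrite x_peak | rewrite (le_trans (x_off _)) ?qk ?ltW].
Qed.

(* Off q, x is r times a vector of the unit ball vanishing on q. *)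
Lemma tail_bound (phi : vec K -> K) :
  lin_functional phi -> peak_bounded q phi ->
  `|phi (zero_on q x)| <= r * (1 - mass phi).
Proof.
move=> phi_lin phi_bd.
pose w j := r^-1 * zero_on q x j.
have w_ball : in_ball w.
  have rV_ge0 : 0 <= r^-1 by rewrite invr_ge0 ltW.
  move=> j; rewrite /w /zero_on normrM (ger0_norm rV_ge0).
  case qj: (q j); first by rewrite normr0 mulr0.
  by rewrite mulrC ler_pdivrMr // mul1r x_off ?qj.
have w_q k : q k -> w k = 0 by move=> qk; rewrite /w /zero_on qk mulr0.
have -> : phi (zero_on q x) = r * phi w.
  rewrite /w lin_functionalZ //; last exact: in_c0_zero_on.
  by rewrite mulrA divff ?mul1r // gt_eqF.
have := mass_split q_lt phi_lin phi_bd (in_c0_scale _ (in_c0_zero_on q x_c0)) w_ball w_q.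
by rewrite normrM (ger0_norm (ltW r_gt0)) ler_pM2l // lerBrDl.
Qed.

Lemma mass_deficit (phi : vec K -> K) :
  lin_functional phi -> peak_bounded q phi ->
  (1 - r) * (1 - mass phi) <= 1 - `|phi x|.
Proof.
move=> phi_lin phi_bd.
have phi_x_le : `|phi x| <= mass phi + r * (1 - mass phi).
  rewrite (decompose q_lt phi_lin x_c0); apply: le_trans (ler_normD _ _) _.
  apply: lerD; last exact: tail_bound.
  apply: le_trans (ler_norm_sum _ _ _) _; apply: ler_sum => k qk.
  by rewrite normrM x_peak // mul1r.
have -> : (1 - r) * (1 - mass phi) = 1 - (mass phi + r * (1 - mass phi)) by ring.
by rewrite lerD2l lerN2.
Qed.

Section DualPeak.
Variable f : vec K -> K.
Hypothesis f_Pi : in_Pi x f.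

Lemma dual_peak_bounded : peak_bounded q f.
Proof. by case: f_Pi => _ [_ [f_le1 _]] _ u u_c0 u_ball _; exact: f_le1. Qed.

Lemma dual_lin : lin_functional f.
Proof. by case: f_Pi => _ []. Qed.

Lemma dual_mass : mass f = 1.
Proof.
have mass_le1 := peak_mass_le1 q_lt dual_lin dual_peak_bounded.
apply/eqP; rewrite eq_le mass_le1 /=.
have := mass_deficit dual_lin dual_peak_bounded.
case: f_Pi => _ _ ->; rewrite normr1 subrr pmulr_rle0 ?subr_gt0 //.
by rewrite subr_le0.
Qed.

Lemma dual_vanish (w : vec K) :
  in_c0 w -> in_ball w -> (forall k, q k -> w k = 0) -> f w = 0.
Proof.
move=> w_c0 w_ball w_q.
have := mass_split q_lt dual_lin dual_peak_bounded w_c0 w_ball w_q.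
by rewrite dual_mass gerDl normr_le0 => /eqP.
Qed.

Lemma dual_on_peak (z : vec K) : in_c0 z -> in_ball z ->
  f z = \sum_(0 <= k < N | q k) z k * f (basis k).
Proof.
move=> z_c0 z_ball; rewrite (decompose q_lt dual_lin z_c0) dual_vanish ?addr0 //.
- exact: in_c0_zero_on.
- exact: in_ball_zero_on.
- by move=> k qk; rewrite /zero_on qk.
Qed.

End DualPeak.

Hypothesis parallelogram : parallelogram_law K.

Section Row.
Variables (T : vec K -> vec K) (n : nat) (mu delta : K).
Hypothesis T_bd : bounded_op T.
Hypothesis T_numrad : forall x' f', in_Pi x' f' -> `|f' (T x')| <= 1.
Hypothesis qn : q n.
Hypothesis mu1 : `|mu| = 1.
Hypothesis delta_gt0 : 0 < delta.
Hypothesis delta_le1 : delta <= 1.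
Hypothesis Tx_close : `|T x n - mu| <= (1 - r) * (delta ^+ 2 / 12).

Let row_lin : lin_functional (fun z => T z n) := lin_row n T_bd.
Let row_bd : peak_bounded q (fun z => T z n) := row_peak_bounded T_numrad qn.

(* The mass of the n-th row of T on q; the patched row spreads the value mu
   over q proportionally to this mass, with the phases of x. *)
Definition row_mass : K := mass (fun z => T z n).
Definition row_coef (k : nat) : K := mu * `|T (basis k) n| / (x k * row_mass).
Definition row_patch (z : vec K) : K := \sum_(0 <= k < N | q k) z k * row_coef k.

(* Since (T x)_n is close to the unimodular mu, the row has almost all its
   mass on q. *)
Lemma row_mass_gap : 1 - row_mass <= delta ^+ 2 / 12.
Proof.
have r1_gt0 : 0 < 1 - r by rewrite subr_gt0.
rewrite -(ler_pM2l r1_gt0); apply: le_trans (mass_deficit row_lin row_bd) _.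
by apply: le_trans Tx_close; rewrite -[X in X - _]mu1 distrC lerB_dist.
Qed.

Lemma row_mass_gt0 : 0 < row_mass.
Proof.
have small : delta ^+ 2 / 12 < 1.
  rewrite ltr_pdivrMr // mul1r; apply: le_lt_trans (exprn_ile1 _ (ltW delta_gt0) delta_le1) _.
  by rewrite ltr1n.
by have := le_lt_trans row_mass_gap small; rewrite gtrBl.
Qed.

Lemma row_mass_le1 : row_mass <= 1.
Proof. exact: (peak_mass_le1 q_lt row_lin row_bd). Qed.

Lemma row_patch_peak : row_patch x = mu.
Proof.
have x_q0 k : q k -> x k != 0 by move=> qk; rewrite -normr_eq0 x_peak ?oner_eq0.
rewrite /row_patch (eq_bigr (fun k => mu / row_mass * `|T (basis k) n|)) => [|k qk].
  by rewrite -mulr_sumr divfK // gt_eqF // row_mass_gt0.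
by rewrite /row_coef; field; rewrite x_q0 // gt_eqF // row_mass_gt0.
Qed.

Lemma row_patch_ball (z : vec K) : in_ball z -> `|row_patch z| <= 1.
Proof.
move=> z_ball; apply: le_trans (ler_norm_sum _ _ _) _.
apply: (@le_trans _ _ (\sum_(0 <= k < N | q k) `|T (basis k) n| / row_mass)).
  apply: ler_sum => k qk; rewrite normrM /row_coef normf_div !normrM mu1 x_peak //.
  rewrite mul1r mul1r normr_id (ger0_norm (ltW row_mass_gt0)).
  by rewrite ler_piMl ?divr_ge0 ?(ltW row_mass_gt0).
by rewrite -mulr_suml divff // gt_eqF // row_mass_gt0.
Qed.

(* The alignment inequality applied to p_k = |T(e_k)_n| and b_k = T(e_k)_n x_k / mu:
   on q the row of T is almost aligned with the phases of x and mu. *)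
Lemma row_align k : q k ->
  `| `|T (basis k) n| - T (basis k) n * x k / mu| <= delta.
Proof.
move=> qk.
have mu0 : mu != 0 by rewrite -normr_eq0 mu1 oner_eq0.
pose b j := T (basis j) n * x j / mu.
have le_bp j : `|b j| <= `|T (basis j) n|.
  by rewrite /b normf_div normrM mu1 divr1 ler_piMr ?peak_x_ball.
set t0 := T (zero_on q x) n.
have sum_b : \sum_(0 <= j < N | q j) b j = (T x n - t0) / mu.
  rewrite (decompose q_lt row_lin x_c0) -/t0 addrK mulr_suml.
  by apply: eq_bigr => j _; rewrite /b [T _ n * _]mulrC.
have t0_le : `|t0| <= 1 - row_mass.
  apply: le_trans (tail_bound row_lin row_bd) _.
  by rewrite ler_piMl ?subr_ge0 ?row_mass_le1 ?ltW.
have gap_le : `|row_mass - \sum_(0 <= j < N | q j) b j| <= delta ^+ 2 / 4.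
  rewrite sum_b.
  have -> : row_mass - (T x n - t0) / mu =
      ((row_mass - 1) * mu - (T x n - mu) + t0) / mu by field.
  rewrite normf_div mu1 divr1.
  apply: le_trans (ler_normD _ _) _; apply: le_trans (lerD (ler_normB _ _) (lexx _)) _.
  rewrite normrM mu1 mulr1 distrC ger0_norm ?subr_ge0 ?row_mass_le1 //.
  have r1_le1 : (1 - r) * (delta ^+ 2 / 12) <= delta ^+ 2 / 12.
    by apply: ler_piMl; [rewrite divr_ge0 ?exprn_ge0 ?ltW | rewrite gerBl ltW].
  apply: le_trans (_ : delta ^+ 2 / 12 + delta ^+ 2 / 12 + delta ^+ 2 / 12 <= _).
    by rewrite !lerD ?row_mass_gap ?(le_trans Tx_close) ?(le_trans t0_le) ?row_mass_gap.
  by rewrite le_eqVlt; apply/orP; left; apply/eqP; field.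
have := alignment parallelogram le_bp qk (q_lt qk).
rewrite -/(b k) => align_k.
rewrite -ler_sqr ?nnegrE ?(ltW delta_gt0) //; apply: le_trans align_k _.
apply: le_trans (_ : 4 * 1 * (delta ^+ 2 / 4) <= _); last first.
  by rewrite le_eqVlt; apply/orP; left; apply/eqP; field.
apply: ler_pM; rewrite ?mulr_ge0 //.
rewrite ler_wpM2l //; apply: le_trans row_mass_le1.
exact (le_sum_term (F := fun j => `|T (basis j) n|) (fun j _ => normr_ge0 _) qk (q_lt qk)).
Qed.

Lemma row_coef_close k : q k ->
  `|row_coef k - T (basis k) n| <= `|T (basis k) n| * (row_mass^-1 - 1) + delta.
Proof.
move=> qk.
have mu0 : mu != 0 by rewrite -normr_eq0 mu1 oner_eq0.
have xk0 : x k != 0 by rewrite -normr_eq0 x_peak ?oner_eq0.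
have m0 : row_mass != 0 by rewrite gt_eqF ?row_mass_gt0.
set a := T (basis k) n.
have -> : row_coef k - a =
    mu / x k * (`|a| * (row_mass^-1 - 1) + (`|a| - a * x k / mu)).
  by rewrite /row_coef -/a; field; rewrite xk0 m0 mu0.
rewrite normrM normf_div mu1 x_peak // divr1 mul1r.
apply: le_trans (ler_normD _ _) (lerD _ (row_align qk)).
rewrite ger0_norm // mulr_ge0 // subr_ge0 invf_ge1 ?row_mass_gt0 ?row_mass_le1 //.
Qed.

Lemma row_patch_close (z : vec K) : in_c0 z -> in_ball z ->
  `|row_patch z - T z n| <= N.+1%:R * delta.
Proof.
move=> z_c0 z_ball.
have m0 : row_mass != 0 by rewrite gt_eqF ?row_mass_gt0.
set tz := T (zero_on q z) n.
have tz_le : `|tz| <= 1 - row_mass.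
  rewrite lerBrDl /row_mass; apply: (mass_split q_lt row_lin row_bd).
  - exact: in_c0_zero_on.
  - exact: in_ball_zero_on.
  - by move=> k qk; rewrite /zero_on qk.
rewrite (decompose q_lt row_lin z_c0) -/tz.
have -> : row_patch z - (\sum_(0 <= k < N | q k) z k * T (basis k) n + tz) =
    \sum_(0 <= k < N | q k) z k * (row_coef k - T (basis k) n) - tz.
  by rewrite opprD addrA -sumrB; congr (_ - _); apply: eq_bigr => k _; ring.
apply: le_trans (ler_normB _ _) _.
apply: le_trans (lerD (_ : _ <= \sum_(0 <= k < N | q k)
    (`|T (basis k) n| * (row_mass^-1 - 1) + delta)) tz_le) _.
  apply: le_trans (ler_norm_sum _ _ _) _; apply: ler_sum => k qk.
  by rewrite normrM; apply: le_trans (row_coef_close qk); rewrite ler_piMl.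
rewrite big_split /= -mulr_suml.
have -> : mass (fun z => T z n) * (row_mass^-1 - 1) = 1 - row_mass.
  by rewrite -/row_mass; field.
have defect_le : (1 - row_mass) + (1 - row_mass) <= delta.
  apply: le_trans (lerD row_mass_gap row_mass_gap) _.
  have -> : delta ^+ 2 / 12 + delta ^+ 2 / 12 = delta * (delta / 6) by field.
  by rewrite ler_piMr ?(ltW delta_gt0) // ler_pdivrMr // mul1r (le_trans delta_le1) // ler1n.
set S := \sum_(0 <= k < N | q k) delta.
have -> : 1 - row_mass + S + (1 - row_mass) = S + ((1 - row_mass) + (1 - row_mass)).
  by ring.
by rewrite -natr1 mulrDl mul1r lerD // sum_const_le // ltW.
Qed.

End Row.

Section Patch.
Variables (f : vec K -> K) (T : vec K -> vec K).
Hypothesis f_Pi : in_Pi x f.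
Hypothesis T_bd : bounded_op T.
Hypothesis T_numrad : forall x' f', in_Pi x' f' -> `|f' (T x')| <= 1.

(* f(Tx) = lam |f(Tx)| with |lam| = 1; for |f(Tx)| to be 1, each (Tx)_k with
   f(e_k) <> 0 should equal the unimodular target lam ph(f(e_k)). *)
Definition target_phase : K := (ph (f (T x)))^-1.
Definition target (k : nat) : K := target_phase * ph (f (basis k)).

Lemma target_phase_norm : `|target_phase| = 1.
Proof. by rewrite normfV ph_norm invr1. Qed.

Lemma target_norm k : `|target k| = 1.
Proof. by rewrite normrM target_phase_norm ph_norm mulr1. Qed.

Let Tx_c0 : in_c0 (T x). Proof. by case: T_bd => T_c0 _ _; exact: T_c0. Qed.
Let Tx_ball : in_ball (T x) := op_ball T_bd T_numrad x_c0 peak_x_ball.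

Lemma target_close (m rho : K) :
  (forall k, q k -> f (basis k) != 0 -> m <= `|f (basis k)|) ->
  0 <= rho -> 1 - `|f (T x)| <= m * rho ^+ 2 / 4 ->
  forall k, q k -> f (basis k) != 0 -> `|T x k - target k| <= rho.
Proof.
move=> m_le rho_ge0 fTx_close k qk fk0.
have lam0 : target_phase != 0 by rewrite -normr_eq0 target_phase_norm oner_eq0.
have fTx_le1 : `|f (T x)| <= 1 by case: f_Pi => _ [_ [f_le1 _]] _; exact: f_le1.
have mass1 : \sum_(0 <= j < N | q j) `|f (basis j)| = 1 := dual_mass f_Pi.
pose b j := f (basis j) * T x j / target_phase.
have le_bp j : `|b j| <= `|f (basis j)|.
  by rewrite /b normf_div normrM target_phase_norm divr1 ler_piMr ?Tx_ball.
have sum_b : \sum_(0 <= j < N | q j) b j = `|f (T x)|.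
  rewrite /b -mulr_suml (eq_bigr (fun j => T x j * f (basis j))) => [|j _]; last first.
    by rewrite mulrC.
  by rewrite -(dual_on_peak f_Pi Tx_c0 Tx_ball) /target_phase invrK mulrC ph_mul.
have := alignment parallelogram le_bp qk (q_lt qk).
have gap_ge0 : 0 <= 1 - `|f (T x)| by rewrite subr_ge0.
rewrite mass1 sum_b (ger0_norm gap_ge0).
have -> : `|f (basis k)| - b k = f (basis k) / target_phase * (target k - T x k).
  by rewrite /b /target -[in LHS]ph_mul; field.
set p := `|f (basis k)|; have p_gt0 : 0 < p by rewrite normr_gt0.
rewrite normrM normf_div target_phase_norm divr1 distrC exprMn => align_k.
rewrite -ler_sqr ?nnegrE // -(ler_pM2l (exprn_gt0 2 p_gt0)).
apply: le_trans align_k _.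
apply: le_trans (_ : 4 * p * (m * rho ^+ 2 / 4) <= _).
  by rewrite ler_wpM2l // mulr_ge0 // ltW.
have -> : 4 * p * (m * rho ^+ 2 / 4) = p * rho ^+ 2 * m by field.
have -> : p ^+ 2 * rho ^+ 2 = p * rho ^+ 2 * p by ring.
by rewrite ler_wpM2l ?m_le // mulr_ge0 ?exprn_ge0 // ltW.
Qed.

Variable delta : K.
Hypothesis delta_gt0 : 0 < delta.
Hypothesis delta_le1 : delta <= 1.
Hypothesis Tx_aligned : forall k, q k -> f (basis k) != 0 ->
  `|T x k - target k| <= (1 - r) * (delta ^+ 2 / 12).

Definition patched_row (n : nat) : bool := q n && (f (basis n) != 0).
Definition patched (z : vec K) : vec K :=
  fun n => if patched_row n then row_patch T n (target n) z else T z n.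

(* Only finitely many rows are changed, so S maps c_0 into c_0. *)
Lemma patched_c0 (z : vec K) : in_c0 z -> in_c0 (patched z).
Proof.
case: T_bd => T_c0 _ _ z_c0; apply: (in_c0_eventually (N := N) (T_c0 z z_c0)) => j le_Nj.
rewrite /patched /patched_row; case qj: (q j) => //=.
by move: (q_lt qj); rewrite ltnNge le_Nj.
Qed.

Lemma patched_ball (z : vec K) : in_c0 z -> in_ball z -> in_ball (patched z).
Proof.
move=> z_c0 z_ball n; rewrite /patched.
case Mn: (patched_row n); last exact: op_ball.
case/andP: Mn => qn fn0.
exact: row_patch_ball T_bd T_numrad qn (target_norm n) delta_gt0 delta_le1
  (Tx_aligned qn fn0) z z_ball.
Qed.

Lemma patched_bounded : bounded_op patched.
Proof.
split; first exact: patched_c0.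
- case: T_bd => _ T_lin _ a z z' z_c0 z'_c0.
  apply: functional_extensionality => n; rewrite /patched.
  case: (patched_row n); last by rewrite T_lin.
  by rewrite /row_patch mulr_sumr -big_split /=; apply: eq_bigr => k _; ring.
- by exists 1 => z z_c0 z_ball n; apply: patched_ball.
Qed.

Lemma patched_peak : f (patched x) = target_phase.
Proof.
rewrite (dual_on_peak f_Pi (patched_c0 x_c0) (patched_ball x_c0 peak_x_ball)).
rewrite (eq_bigr (fun k => target_phase * `|f (basis k)|)) => [|k qk].
  have mass1 : \sum_(0 <= k < N | q k) `|f (basis k)| = 1 := dual_mass f_Pi.
  by rewrite -mulr_sumr mass1 mulr1.
rewrite /patched /patched_row qk /=; have [->|fk0] := eqVneq (f (basis k)) 0.
  by rewrite mulr0 normr0 mulr0.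
rewrite (row_patch_peak T_bd T_numrad qk (target_norm k) delta_gt0 delta_le1
  (Tx_aligned qk fk0)).
by rewrite /target -mulrA ph_mul.
Qed.

(* Hence v(S) = 1: it is at most ||S|| <= 1 and attained at (x, f). *)
Lemma patched_numrad : numrad_eq patched 1.
Proof.
split.
  move=> x' f' [[x'_c0 [x'_ball _]] [_ [f'_le1 _]] _].
  by apply: f'_le1; [exact: patched_c0 | exact: patched_ball].
move=> e e_gt0; exists x, f; split=> //.
by rewrite patched_peak target_phase_norm gtrDl oppr_lt0.
Qed.

Lemma patched_close (z : vec K) : in_c0 z -> in_ball z ->
  forall n, `|patched z n - T z n| <= N.+1%:R * delta.
Proof.
move=> z_c0 z_ball n; rewrite /patched.
case Mn: (patched_row n); last by rewrite subrr normr0 mulr_ge0 // ltW.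
case/andP: Mn => qn fn0.
exact: row_patch_close T_bd T_numrad qn (target_norm n) delta_gt0 delta_le1
  (Tx_aligned qn fn0) z z_c0 z_ball.
Qed.

Lemma patched_approx : exists S : vec K -> vec K,
  [/\ bounded_op S, numrad_eq S 1, `|f (S x)| = 1 &
      forall z, in_c0 z -> in_ball z -> forall n, `|S z n - T z n| <= N.+1%:R * delta].
Proof.
exists patched; split.
- exact: patched_bounded.
- exact: patched_numrad.
- by rewrite patched_peak target_phase_norm.
- exact: patched_close.
Qed.

End Patch.

(* The L_{p,p}-nu at a pair (x, f) whose peak set is q: eta is chosen from a
   lower bound m of the nonzero |f(e_k)|, k in q, and from the step delta. *)
Lemma peak_nu (f : vec K -> K) : in_Pi x f ->
  forall eps : K, 0 < eps -> exists eta : K, 0 < eta /\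
    forall T : vec K -> vec K, bounded_op T -> numrad_eq T 1 ->
      1 - eta < `|f (T x)| ->
      exists S : vec K -> vec K,
        [/\ bounded_op S, numrad_eq S 1, `|f (S x)| = 1 & op_dist_lt S T eps].
Proof.
move=> f_Pi eps eps_gt0.
have f_pos k : f (basis k) != 0 -> 0 < `|f (basis k)| by rewrite normr_gt0.
have [m [m_gt0 _ m_le]] := finite_lower_bound N f_pos.
have [delta [delta_gt0 delta_le1 delta_eps]] := step_size N eps_gt0.
pose rho := (1 - r) * (delta ^+ 2 / 12).
have rho_gt0 : 0 < rho by rewrite mulr_gt0 ?subr_gt0 // divr_gt0 // exprn_gt0.
exists (m * rho ^+ 2 / 4); split; first by rewrite divr_gt0 // mulr_gt0 // exprn_gt0.
move=> T T_bd [T_numrad _] fTx_close.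
have Tx_aligned : forall k, q k -> f (basis k) != 0 -> `|T x k - target f T k| <= rho.
  apply: (target_close (m := m) f_Pi T_bd T_numrad _ (ltW rho_gt0)).
  - by move=> j qj; apply: m_le (q_lt qj).
  - by rewrite lerBlDr -lerBlDl; apply: ltW.
have [S [S_bd S_numrad S_peak S_close]] :=
  patched_approx f_Pi T_bd T_numrad delta_gt0 delta_le1 Tx_aligned.
by exists S; split=> //; exists (N.+1%:R * delta).
Qed.
End PeakVector.

Lemma peak_set (K : numFieldType) (x : vec K) : in_sphere x ->
  exists (N : nat) (r : K), [/\ 0 < r, r < 1 &
    forall k, ~~ ((k < N)%N && (`|x k| == 1)) -> `|x k| <= r].
Proof.
case=> x_c0 [x_ball _].
have half_gt0 : 0 < 2^-1 :> K by rewrite invr_gt0.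
have [N x_tail] := x_c0 _ half_gt0.
have gap_gt0 k : `|x k| != 1 -> 0 < 1 - `|x k|.
  by move=> xk1; rewrite subr_gt0 lt_neqAle xk1 x_ball.
have [a [a_gt0 a_le1 a_le]] := finite_lower_bound N gap_gt0.
have a2_le : a / 2 <= 2^-1 by apply: ler_piMl; [rewrite invr_ge0 ler0n | exact: a_le1].
exists N, (1 - a / 2); split.
- by rewrite subr_gt0 (le_lt_trans a2_le) // invf_lt1 // ltr1n.
- by rewrite gtrBl divr_gt0.
- move=> k; case: (ltnP k N) => [lt_kN /= xk1|le_Nk _].
    apply: le_trans (_ : 1 - a <= _); first by rewrite lerBrDl -lerBrDr a_le.
    by rewrite lerD2l lerN2 ler_pdivrMr // ler_peMr ?ler1n // ltW.
  apply: ltW (lt_le_trans (x_tail k le_Nk) _).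
  rewrite lerBrDr -lerBrDl (le_trans a2_le) //.
  by rewrite le_eqVlt; apply/orP; left; apply/eqP; field.
Qed.

Lemma c0_Lpp_nu (K : numFieldType) : parallelogram_law K -> c0_has_Lpp_nu K.
Proof.
move=> parallelogram eps eps_gt0 x f f_Pi.
have [x_sphere _ _] := f_Pi.
have [N [r [r_gt0 r_lt1 x_off]]] := peak_set x_sphere.
pose q : pred nat := fun k => (k < N)%N && (`|x k| == 1).
have q_lt k : q k -> (k < N)%N by case/andP.
have x_peak k : q k -> `|x k| = 1 by case/andP => _ /eqP.
exact: (peak_nu q_lt x_sphere.1 x_peak x_off r_gt0 r_lt1 parallelogram f_Pi eps_gt0).
Qed.

Lemma parallelogram_real (R : realFieldType) : parallelogram_law R.
Proof. by move=> a b; rewrite !real_normK ?num_real //; ring. Qed.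

Lemma parallelogram_complex (C : numClosedFieldType) : parallelogram_law C.
Proof. by move=> a b; rewrite !normCK rmorphB rmorphD; ring. Qed.

Theorem theorem3p5 (R : realType) :
  c0_has_Lpp_nu R /\ c0_has_Lpp_nu R[i].
Proof.
by split; apply: c0_Lpp_nu; [exact: parallelogram_real | exact: parallelogram_complex].
Qed.
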